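(* Let $\mathcal{T}$ be a tangle of order $k$ in a connectivity system $(E,\lambda)$, and let $X$ be a $\mathcal{T}$-strong $k$-separating set in $\lambda$. If $(X_i)_{i=1}^m$ is a partial $k$-sequence for $X$, then $X\cup \bigcup_{i=1}^m X_i\subseteq \mathrm{fcl}_{\mathcal{T}}(X)$.
   Context: A connectivity system is a pair $(E,\lambda)$ with $E$ finite and $\lambda$ an integer-valued symmetric submodular function on subsets of $E$. $X$ is $k$-separating if $\lambda(X)\le k$. A tangle of order $k$ is a collection $\mathcal T$ of subsets of $E$ with (T1) $\lambda(A)<k$ for $A\in\mathcal T$; (T2) if $\lambda(A)\le k-1$ then $A\in\mathcal T$ or $E-A\in\mathcal T$; (T3) $A\cup B\cup C\ne E$ for $A,B,C\in\mathcal T$; (T4) $E-\{e\}\notin\mathcal T$ for $e\in E$. A set is $\mathcal T$-weak if contained in a member of $\mathcal T$, and $\mathcal T$-strong otherwise. A $\mathcal T$-strong $k$-separating set $X$ is fully closed if $X\cup Y$ is not $k$-separating for every nonempty $\mathcal T$-weak $Y\subseteq E-X$. For a $\mathcal T$-strong $k$-separating $X$, $\mathrm{fcl}_{\mathcal T}(X)$ is the intersection of all fully closed $k$-separating sets containing $X$. A partial $k$-sequence for $X$ is a sequence $(X_i)_{i=1}^m$ of pairwise disjoint nonempty $\mathcal T$-weak subsets of $E-X$ such that $X\cup\bigcup_{i=1}^jX_i$ is $k$-separating for all $j\in\{1,\dots,m\}$. *)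

From mathcomp Require Import all_boot all_order all_algebra.
Set Implicit Arguments. Unset Strict Implicit. Unset Printing Implicit Defensive.
Import Order.TTheory GRing.Theory Num.Theory.
Local Open Scope ring_scope.

Definition connectivity_system (E : finType) (lam : {set E} -> int) : Prop :=
  (forall A : {set E}, lam A = lam (~: A)) /\
  (forall A B : {set E}, lam (A :|: B) + lam (A :&: B) <= lam A + lam B).

Definition k_separating (E : finType) (lam : {set E} -> int) (k : int)
  (X : {set E}) : Prop := lam X <= k.

Definition tangle (E : finType) (lam : {set E} -> int) (k : int)
  (T : {set {set E}}) : Prop :=
  [/\ (forall A, A \in T -> lam A < k),
      (forall A, lam A <= k - 1 -> A \in T \/ ~: A \in T),
      (forall A B C, A \in T -> B \in T -> C \in T -> A :|: B :|: C != setT)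
    & (forall e : E, ~: [set e] \notin T)].

Definition T_weak (E : finType) (T : {set {set E}}) (Y : {set E}) : bool :=
  [exists A in T, Y \subset A].

Definition T_strong (E : finType) (T : {set {set E}}) (Y : {set E}) : bool :=
  ~~ T_weak T Y.

Definition k_separatingb (E : finType) (lam : {set E} -> int) (k : int)
  (X : {set E}) : bool := lam X <= k.

Definition fully_closed (E : finType) (lam : {set E} -> int) (k : int)
  (T : {set {set E}}) (X : {set E}) : bool :=
  [&& T_strong T X, k_separatingb lam k X &
      [forall Y : {set E}, ((Y != set0) && T_weak T Y && (Y \subset ~: X)) ==>
        ~~ k_separatingb lam k (X :|: Y)]].

Definition fcl (E : finType) (lam : {set E} -> int) (k : int)
  (T : {set {set E}}) (X : {set E}) : {set E} :=
  \bigcap_(Z : {set E} | fully_closed lam k T Z && (X \subset Z)) Z.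

Definition partial_k_sequence (E : finType) (lam : {set E} -> int) (k : int)
  (T : {set {set E}}) (X : {set E}) (s : seq {set E}) : Prop :=
  [/\ (forall i j, (i < size s)%N -> (j < size s)%N -> i != j ->
          [disjoint nth set0 s i & nth set0 s j]),
      (forall i, (i < size s)%N ->
          [/\ nth set0 s i != set0, T_weak T (nth set0 s i)
            & nth set0 s i \subset ~: X])
    & (forall j, (1 <= j <= size s)%N ->
          k_separating lam k (X :|: \bigcup_(Y <- take j s) Y))].

From mathcomp Require Import all_boot all_order all_algebra.
From mathcomp Require Import zify.
Set Implicit Arguments. Unset Strict Implicit. Unset Printing Implicit Defensive.
Import Order.TTheory.
Local Open Scope ring_scope.

(* Let Z be fully closed with X ⊆ Z, and extend X ∪ X_1 ∪ ... ∪ X_(j-1) ⊆ Z by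
   the T-weak set X_j. If X_j ⊈ Z, the set W = X ∪ X_1 ∪ ... ∪ X_j is
   k-separating but Z ∪ W is not, so by submodularity Z ∩ W is (k-1)-separating.
   It contains the T-strong set X, hence its complement lies in T, which makes
   the complement of Z T-weak. But Z ∪ ~Z = E and λ(E) <= λ(X) <= k, so full
   closure of Z is violated. *)

Section FullClosure.

Variables (E : finType) (lam : {set E} -> int) (k : int) (T : {set {set E}}).
Hypothesis lam_cs : connectivity_system lam.

Lemma T_weakS (Y Y' : {set E}) : Y' \subset Y -> T_weak T Y -> T_weak T Y'.
Proof.
move=> sY'Y /existsP[A /andP[AT sYA]]; apply/existsP; exists A.
by rewrite AT (subset_trans sY'Y sYA).
Qed.

Lemma T_strongS (Y Y' : {set E}) : Y \subset Y' -> T_strong T Y -> T_strong T Y'.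
Proof. by move=> sYY'; apply: contra; apply: T_weakS. Qed.

(* Submodularity on X and ~X, together with symmetry and λ(∅) = λ(E). *)
Lemma lam_setT_le (X : {set E}) : lam setT <= lam X.
Proof.
case: lam_cs => lamC lam_sub.
have := lam_sub X (~: X); rewrite setUCr setICr -(lamC X).
have -> : lam set0 = lam setT by rewrite lamC setC0.
lia.
Qed.

Lemma fully_closed_setC_strong (Z : {set E}) :
  fully_closed lam k T Z -> lam setT <= k -> ~: Z != set0 -> T_strong T (~: Z).
Proof.
move=> /and3P[_ _ /forallP closedZ] lamT_le nZC; apply/negP => wZC.
move: (closedZ (~: Z)); rewrite nZC wZC subxx setUCr /= /k_separatingb.
by rewrite lamT_le.
Qed.

Lemma fully_closed_absorb (Z W : {set E}) :
  tangle lam k T -> fully_closed lam k T Z -> lam setT <= k ->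
  lam W <= k -> T_strong T (Z :&: W) -> T_weak T (W :\: Z) -> W \subset Z.
Proof.
move=> [_ T2 _ _] fcZ lamT_le lamW_le sZW wWZ.
apply/negPn/negP => nsWZ.
have nWZ : W :\: Z != set0 by rewrite setD_eq0.
have /and3P[_ lamZ_le /forallP closedZ] := fcZ.
have lamZW_gt : k < lam (Z :|: W).
  move: (closedZ (W :\: Z)); rewrite nWZ wWZ subsetDr /=.
  by rewrite setDE setUIr setUCr setIT /k_separatingb -ltNge.
have lamZW_le : lam (Z :&: W) <= k - 1.
  case: lam_cs => _ lam_sub; have := lam_sub Z W.
  by move: lamZ_le; rewrite /k_separatingb; lia.
have nZT : Z :&: W \notin T.
  by apply: contra sZW => ZT; apply/existsP; exists (Z :&: W); rewrite ZT subxx.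
have ZWC_T : ~: (Z :&: W) \in T by case: (T2 _ lamZW_le) => // ZT; rewrite ZT in nZT.
have wZC : T_weak T (~: Z).
  by apply/existsP; exists (~: (Z :&: W)); rewrite ZWC_T setCS subsetIl.
have nZC : ~: Z != set0 by apply: contraNneq nWZ => ZC0; rewrite setDE ZC0 setI0.
by move: (fully_closed_setC_strong fcZ lamT_le nZC); rewrite /T_strong wZC.
Qed.

End FullClosure.

Theorem lemma3p4 (E : finType) (lam : {set E} -> int) (k : int)
  (T : {set {set E}}) (X : {set E}) (s : seq {set E}) :
  connectivity_system lam ->
  tangle lam k T ->
  T_strong T X ->
  k_separating lam k X ->
  partial_k_sequence lam k T X s ->
  X :|: \bigcup_(Y <- s) Y \subset fcl lam k T X.
Proof.
move=> lam_cs tT sX lamX_le [_ seq_weak seq_sep].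
have lamT_le : lam setT <= k := le_trans (lam_setT_le lam_cs X) lamX_le.
apply/bigcapsP => Z /andP[fcZ sXZ].
suff prefix_sub j : (j <= size s)%N -> X :|: \bigcup_(Y <- take j s) Y \subset Z.
  by rewrite -(take_size s) prefix_sub.
elim: j => [|j IHj] ltjs; first by rewrite take0 big_nil setU0.
have sPZ := IHj (ltnW ltjs).
have [_ wXj _] := seq_weak j ltjs.
have := seq_sep j.+1; rewrite ltjs => /(_ isT).
rewrite /k_separating (take_nth set0 ltjs) big_rcons setUA => lamW_le.
apply: (fully_closed_absorb lam_cs tT fcZ lamT_le lamW_le).
- by apply: T_strongS sX; rewrite subsetI sXZ -setUA subsetUl.
- apply: T_weakS wXj; rewrite setDUl.
  by move: sPZ; rewrite -setD_eq0 => /eqP ->; rewrite set0U subsetDl.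
Qed.
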